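(* Let $\mathcal{A}=(\Sigma,Q,q_0,\delta,F)$ be an alternating Büchi automaton and let $p\in\Sigma$. If $\mathcal{A}$ is nondeterministic, then $\mathcal{A}$ is in existential normal form for $p$. If $\mathcal{A}$ is universal, then $\mathcal{A}$ is in universal normal form for $p$. If $\mathcal{A}$ is deterministic, then $\mathcal{A}$ is in both existential and universal normal form for $p$.
   Context: Let $\Sigma$ be a finite set of Boolean variables; words are infinite sequences $w\in(2^\Sigma)^\omega$ with $k$-th letter $w[k]$. $L_\Sigma=\Sigma\cup\{\neg a: a\in\Sigma\}$ is the set of literals; in a letter $\sigma\subseteq\Sigma$ the literal $a$ is true iff $a\in\sigma$ and $\neg a$ is true iff $a\notin\sigma$. $\mathbb{B}^+(S)$ denotes positive Boolean formulas (built from atoms in $S$, $\wedge$, $\vee$, true, false). An alternating Büchi automaton is $\mathcal{A}=(\Sigma,Q,q_0,\delta,F)$ with finite state set $Q$, initial state $q_0$, transition function $\delta:Q\to\mathbb{B}^+(Q\cup L_\Sigma)$ (elements of $Q\cup L_\Sigma$ are treated as atoms), and $F\subseteq Q$. A set $X\subseteq Q\cup L_\Sigma$ satisfies $\delta(q)$ if $\delta(q)$ evaluates to true when exactly the atoms in $X$ are true. A run on $w$ is a $Q$-labeled tree whose root is labeled $q_0$ such that for every node at depth $k$ labeled $q$, with $S$ the set of labels of its children, $S\cup\{\ell\in L_\Sigma:\ell \text{ true in } w[k]\}$ satisfies $\delta(q)$; it is accepting if every infinite branch visits $F$ infinitely often; $\mathcal{L}(\mathcal{A})$ is the set of words with an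 accepting run. For $p\in\Sigma$: $\mathcal{L}(\exists p.\mathcal{A})$ is the set of words $w\in(2^{\Sigma\setminus\{p\}})^\omega$ such that some $w'\in(2^\Sigma)^\omega$ with $w'[k]\setminus\{p\}=w[k]$ for all $k$ lies in $\mathcal{L}(\mathcal{A})$; $\mathcal{L}(\forall p.\mathcal{A})$ is the set of such $w$ for which every such $w'$ lies in $\mathcal{L}(\mathcal{A})$. For a formula $B$, $B[p\mapsto 1]$ replaces atom $p$ by true and atom $\neg p$ by false, and $B[p\mapsto 0]$ the reverse. The state-wise existential quantification $\exists^\circ p.\mathcal{A}$ is $(\Sigma\setminus\{p\},Q,q_0,\delta',F)$ with $\delta'(q)=\delta(q)[p\mapsto1]\vee\delta(q)[p\mapsto0]$; the state-wise universal quantification $\forall^\circ p.\mathcal{A}$ is the same with $\delta'(q)=\delta(q)[p\mapsto1]\wedge\delta(q)[p\mapsto0]$. $\mathcal{A}$ is in existential normal form for $p$ if $\mathcal{L}(\exists^\circ p.\mathcal{A})=\mathcal{L}(\exists p.\mathcal{A})$, and in universal normal form for $p$ if $\mathcal{L}(\forall^\circ p.\mathcal{A})=\mathcal{L}(\forall p.\mathcal{A})$. $\mathcal{A}$ is nondeterministic if for every state $q$ the transition formula $\delta(q)$, restricted to its state part, is a disjunction of states (i.e., for every state $q$ and every letter, once the literals are evaluated according to the letter, $\delta(q)$ is equivalent to a disjunction of states); universal if it is analogously a conjunction of states; deterministic in the standard sense (for every state and letter there is a single successor state). *)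

From mathcomp Require Import all_boot.
Set Implicit Arguments. Unset Strict Implicit. Unset Printing Implicit Defensive.

Inductive pbf (A : Type) : Type :=
| PAtom of A
| PAnd of pbf A & pbf A
| POr of pbf A & pbf A
| PTrue
| PFalse.
Arguments PTrue {A}. Arguments PFalse {A}.

Fixpoint psat (A : Type) (v : A -> Prop) (f : pbf A) : Prop :=
  match f with
  | PAtom a => v a
  | PAnd f1 f2 => psat v f1 /\ psat v f2
  | POr f1 f2 => psat v f1 \/ psat v f2
  | PTrue => True
  | PFalse => False
  end.

Fixpoint psubst (A : Type) (s : A -> pbf A) (f : pbf A) : pbf A :=
  match f with
  | PAtom a => s a
  | PAnd f1 f2 => PAnd (psubst s f1) (psubst s f2)
  | POr f1 f2 => POr (psubst s f1) (psubst s f2)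
  | PTrue => PTrue
  | PFalse => PFalse
  end.

Inductive lit (V : Type) : Type := Pos of V | Neg of V.

Definition lit_true (V : finType) (sigma : {set V}) (l : lit V) : Prop :=
  match l with Pos a => a \in sigma | Neg a => a \notin sigma end.

(* Alternating Buchi automaton with variable set V (Sigma) and state set Q *)
Record aba (V Q : finType) := ABA {
  init : Q;
  delta : Q -> pbf (Q + lit V);
  accept : {set Q}
}.

Definition word (V : finType) := nat -> {set V}.

(* A run tree: nodes are finite sequences of child indices (prefix-closed set N),
   the depth of node x is size x, labels given by lab. *)
Definition is_run (V Q : finType) (A : aba V Q) (w : word V)
    (N : seq nat -> Prop) (lab : seq nat -> Q) : Prop :=
  [/\ N [::], lab [::] = init A,
      (forall x i, N (rcons x i) -> N x) &
      forall x, N x ->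
        psat (fun a => match a with
                       | inl q => exists i, N (rcons x i) /\ lab (rcons x i) = q
                       | inr l => lit_true (w (size x)) l
                       end) (delta A (lab x))].

Definition run_accepting (V Q : finType) (A : aba V Q)
    (N : seq nat -> Prop) (lab : seq nat -> Q) : Prop :=
  forall b : nat -> nat, (forall n, N (mkseq b n)) ->
    forall n, exists m, n <= m /\ lab (mkseq b m) \in accept A.

Definition lang (V Q : finType) (A : aba V Q) (w : word V) : Prop :=
  exists N lab, is_run A w N lab /\ run_accepting A N lab.

(* words over Sigma \ {p} are represented as words never containing p *)
Definition p_free (V : finType) (p : V) (w : word V) : Prop :=
  forall k, p \notin w k.

Definition ext_of (V : finType) (p : V) (w' w : word V) : Prop :=
  forall k, w' k :\ p = w k.

Definition lang_exists (V Q : finType) (A : aba V Q) (p : V) (w : word V) : Prop :=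
  exists w', ext_of p w' w /\ lang A w'.

Definition lang_forall (V Q : finType) (A : aba V Q) (p : V) (w : word V) : Prop :=
  forall w', ext_of p w' w -> lang A w'.

Definition subst_p (V Q : finType) (p : V) (b : bool) (f : pbf (Q + lit V)) :=
  psubst (fun a => match a with
                   | inr (Pos x) => if x == p then (if b then PTrue else PFalse) else PAtom a
                   | inr (Neg x) => if x == p then (if b then PFalse else PTrue) else PAtom a
                   | inl _ => PAtom a
                   end) f.

Definition sw_exists (V Q : finType) (A : aba V Q) (p : V) : aba V Q :=
  ABA (init A) (fun q => POr (subst_p p true (delta A q)) (subst_p p false (delta A q)))
      (accept A).

Definition sw_forall (V Q : finType) (A : aba V Q) (p : V) : aba V Q :=
  ABA (init A) (fun q => PAnd (subst_p p true (delta A q)) (subst_p p false (delta A q)))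
      (accept A).

Definition existential_nf (V Q : finType) (A : aba V Q) (p : V) : Prop :=
  forall w, p_free p w -> (lang (sw_exists A p) w <-> lang_exists A p w).

Definition universal_nf (V Q : finType) (A : aba V Q) (p : V) : Prop :=
  forall w, p_free p w -> (lang (sw_forall A p) w <-> lang_forall A p w).

Definition eval_at (V Q : finType) (A : aba V Q) (q : Q) (sigma : {set V}) (X : {set Q}) : Prop :=
  psat (fun a => match a with inl q' => q' \in X | inr l => lit_true sigma l end) (delta A q).

Definition nondeterministic (V Q : finType) (A : aba V Q) : Prop :=
  forall q sigma, exists S : {set Q},
    forall X : {set Q}, eval_at A q sigma X <-> [exists q' in S, q' \in X].

Definition universal (V Q : finType) (A : aba V Q) : Prop :=
  forall q sigma, exists S : {set Q},
    forall X : {set Q}, eval_at A q sigma X <-> [forall q' in S, q' \in X].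

Definition deterministic (V Q : finType) (A : aba V Q) : Prop :=
  forall q sigma, exists q' : Q,
    forall X : {set Q}, eval_at A q sigma X <-> q' \in X.

From mathcomp Require Import all_boot.
From Stdlib Require Import Classical IndefiniteDescription.

Set Implicit Arguments. Unset Strict Implicit. Unset Printing Implicit Defensive.

(* Evaluating B[p |-> b] at a letter is evaluating B at that letter with p
   set to b.  So a run of the state-wise quantified automaton is a run of A in
   which every node picks its own value of p, while a run of A on a single
   extension w' of w picks one value per level; this already gives
   L(exists p. A) <= L(exists° p. A) and L(forall° p. A) <= L(forall p. A).
   For the converses the choices have to agree along each level.  A
   nondeterministic automaton accepts iff it has an accepting run that is a
   single path, and a path has one node per level.  A universal automaton
   accepts iff every path of forced successors visits F infinitely often; a
   forced path of forall° p. A is, letter by letter, forced in A for some value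
   of p, hence a forced path of A on some extension w', which A accepts. *)

Section PositiveFormulas.
Variable T : Type.
Implicit Types (v : T -> Prop) (f : pbf T).

Lemma psat_mono v v' f : (forall a, v a -> v' a) -> psat v f -> psat v' f.
Proof. by move=> vv'; elim: f => [a|f1 IH1 f2 IH2|f1 IH1 f2 IH2||] /=; auto; tauto. Qed.

Lemma psat_ext v v' f : (forall a, v a <-> v' a) -> (psat v f <-> psat v' f).
Proof. by move=> vv'; split; apply: psat_mono => a /vv'. Qed.

Lemma psat_psubst v (s : T -> pbf T) f :
  psat v (psubst s f) <-> psat (fun a => psat v (s a)) f.
Proof. by elim: f => [a|f1 IH1 f2 IH2|f1 IH1 f2 IH2||] /=; tauto. Qed.

End PositiveFormulas.

Section Letters.
Variables (V : finType) (p : V).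
Implicit Types (s : {set V}) (b : bool).

Definition assign b s : {set V} := if b then p |: s else s :\ p.

Lemma assign_setD1 s : assign (p \in s) (s :\ p) = s.
Proof.
rewrite /assign; case: ifP => [/setD1K //|pNs].
by apply/setP => x; rewrite !inE; case: eqP => // ->; rewrite pNs.
Qed.

Lemma assign_free b s : p \notin s -> assign b s :\ p = s.
Proof.
move=> pNs; apply/setP => x.
by rewrite /assign; case: b; rewrite !inE; case: eqP => // ->; rewrite (negbTE pNs).
Qed.

Lemma ext_of_assign (w : word V) (bit : nat -> bool) :
  p_free p w -> ext_of p (fun k => assign (bit k) (w k)) w.
Proof. by move=> wF k; rewrite assign_free. Qed.

Definition atom_val (Q : finType) (P : Q -> Prop) s (a : Q + lit V) : Prop :=
  match a with inl q => P q | inr l => lit_true s l end.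

Lemma psat_subst_p (Q : finType) (P : Q -> Prop) b s f :
  psat (atom_val P s) (subst_p p b f) <-> psat (atom_val P (assign b s)) f.
Proof.
rewrite /subst_p psat_psubst; apply: psat_ext => -[q|[x|x]] //=;
  case: eqP => [->|/eqP xNp]; rewrite /assign;
  by case: b; rewrite /= !inE ?eqxx ?(negbTE xNp).
Qed.

End Letters.

Lemma dependent_choice_path (P : seq nat -> Prop) (R : seq nat -> nat -> Prop) :
  P [::] -> (forall y, P y -> exists i, P (rcons y i) /\ R y i) ->
  exists c : nat -> nat, forall m, P (mkseq c m) /\ R (mkseq c m) (c m).
Proof.
move=> P0 step.
have [g gP] : exists g : seq nat -> nat,
    forall y, P y -> P (rcons y (g y)) /\ R y (g y).
  apply: (functional_choice (fun y i => P y -> P (rcons y i) /\ R y i)) => y.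
  by case: (classic (P y)) => [/step [i hi]|nPy]; [exists i | exists 0].
pose fix ys m := if m is m'.+1 then rcons (ys m') (g (ys m')) else [::].
have ysE m : mkseq (g \o ys) m = ys m by elim: m => //= m IH; rewrite mkseqS IH.
have Pys m : P (ys m) by elim: m => //= m /gP [].
by exists (g \o ys) => m; rewrite ysE; split; [|case: (gP _ (Pys m))].
Qed.

Lemma set_of_pred (T : finType) (P : T -> Prop) :
  exists X : {set T}, forall x, x \in X <-> P x.
Proof.
have [f fP] : exists f : T -> bool, forall x, f x <-> P x.
  apply: (functional_choice (fun x (b : bool) => b <-> P x)) => x.
  by case: (classic (P x)) => Px; [exists true | exists false].
by exists [set x | f x] => x; rewrite inE.
Qed.

Section Automata.
Variables (V Q : finType).
Implicit Types (A : aba V Q) (w : word V) (q : Q) (s : {set V}) (P : Q -> Prop).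

(* Both [eval_at A q s X] and the local condition of [is_run] at a node are
   convertible to instances of [sat_delta]. *)
Definition sat_delta A q s P := psat (atom_val P s) (delta A q).

Lemma sat_delta_mono A q s P P' :
  (forall q', P q' -> P' q') -> sat_delta A q s P -> sat_delta A q s P'.
Proof. by move=> PP'; apply: psat_mono => -[q'|l] //=; apply: PP'. Qed.

Lemma sat_delta_sw_exists A p q s P :
  sat_delta (sw_exists A p) q s P <->
  sat_delta A q (assign p true s) P \/ sat_delta A q (assign p false s) P.
Proof.
have := psat_subst_p p P true s (delta A q).
have := psat_subst_p p P false s (delta A q).
rewrite /sat_delta /=; tauto.
Qed.

Lemma sat_delta_sw_forall A p q s P :
  sat_delta (sw_forall A p) q s P <->
  sat_delta A q (assign p true s) P /\ sat_delta A q (assign p false s) P.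
Proof.
have := psat_subst_p p P true s (delta A q).
have := psat_subst_p p P false s (delta A q).
rewrite /sat_delta /=; tauto.
Qed.

Lemma lang_transfer A B w w' :
  init A = init B -> accept A = accept B ->
  (forall k q P, sat_delta A q (w k) P -> sat_delta B q (w' k) P) ->
  lang A w -> lang B w'.
Proof.
move=> eq_init eq_acc step [N [lab [[N0 lab0 Nrcons run] acc]]].
exists N, lab; split.
  by split=> // [|x /run]; [rewrite -eq_init | apply: step].
by move=> b Nb n; have [m] := acc b Nb n; rewrite eq_acc; exists m.
Qed.

Lemma sw_exists_of_lang_exists A p w : lang_exists A p w -> lang (sw_exists A p) w.
Proof.
case=> w' [ext_w' /lang_transfer]; apply=> // k q P h.
apply/sat_delta_sw_exists; move: h; rewrite -(ext_w' k).
by rewrite -{1}(assign_setD1 p (w' k)); case: (p \in w' k); tauto.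
Qed.

Lemma lang_forall_of_sw_forall A p w : lang (sw_forall A p) w -> lang_forall A p w.
Proof.
move=> /lang_transfer accA w' ext_w'; apply: accA => // k q P /sat_delta_sw_forall.
by rewrite -(ext_w' k) -{3}(assign_setD1 p (w' k)); case: (p \in w' k) => -[].
Qed.

Definition disj_succ A q s (S : {set Q}) :=
  forall X : {set Q}, eval_at A q s X <-> [exists q' in S, q' \in X].

Definition conj_succ A q s (S : {set Q}) :=
  forall X : {set Q}, eval_at A q s X <-> [forall q' in S, q' \in X].

Definition linear_run A w (qs : nat -> Q) :=
  qs 0 = init A /\ forall m, eval_at A (qs m) (w m) [set qs m.+1].

Definition inf_accepting A (qs : nat -> Q) :=
  forall n, exists m, n <= m /\ qs m \in accept A.

Lemma disj_succ_sat A q s S P :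
  disj_succ A q s S -> sat_delta A q s P -> exists2 q', P q' & eval_at A q s [set q'].
Proof.
move=> succS satP; have [X XP] := set_of_pred P.
have /succS/exists_inP [q' q'S /XP Pq'] : sat_delta A q s [in X].
  by apply: sat_delta_mono satP => q' /XP.
by exists q' => //; apply/succS/exists_inP; exists q'; rewrite ?set11.
Qed.

Lemma disj_succ_sw_exists A p q s S1 S0 :
  disj_succ A q (assign p true s) S1 -> disj_succ A q (assign p false s) S0 ->
  disj_succ (sw_exists A p) q s (S1 :|: S0).
Proof.
move=> succ1 succ0 X; split.
  case/sat_delta_sw_exists => [/succ1|/succ0] /exists_inP [q' q'S q'X];
    by apply/exists_inP; exists q'; rewrite // inE q'S ?orbT.
case/exists_inP => q'; rewrite inE => /orP [] q'S q'X; apply/sat_delta_sw_exists;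
  [left; apply/succ1 | right; apply/succ0]; by apply/exists_inP; exists q'.
Qed.

Lemma nondeterministic_sw_exists A p :
  nondeterministic A -> nondeterministic (sw_exists A p).
Proof.
move=> ndA q s; have [S1 succ1] := ndA q (assign p true s).
have [S0 succ0] := ndA q (assign p false s).
by exists (S1 :|: S0); apply: disj_succ_sw_exists.
Qed.

Lemma lang_of_linear_run A w qs : linear_run A w qs -> inf_accepting A qs -> lang A w.
Proof.
move=> [qs0 step] acc; exists (fun _ => True), (fun x => qs (size x)); split.
  split=> // x _; apply: sat_delta_mono (step (size x)) => q' /set1P ->.
  by exists 0; rewrite size_rcons.
by move=> b _ n; have [m] := acc n; exists m; rewrite size_mkseq.
Qed.

Lemma linear_run_of_lang A w :
  nondeterministic A -> lang A w -> exists2 qs, linear_run A w qs & inf_accepting A qs.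
Proof.
move=> ndA [N [lab [[N0 lab0 _ run] acc]]].
have [|c Hc] := @dependent_choice_path N
  (fun y i => eval_at A (lab y) (w (size y)) [set lab (rcons y i)]) N0.
- move=> y /run run_y; have [S succS] := ndA (lab y) (w (size y)).
  by have [q' [i [Ni <-]] ?] := disj_succ_sat succS run_y; exists i.
- exists (fun m => lab (mkseq c m)); first split=> // m.
    by have [_] := Hc m; rewrite size_mkseq mkseqS.
  by move=> n; have [m] := acc c (fun m => (Hc m).1) n; exists m.
Qed.

Definition forced A q s q' := forall X : {set Q}, eval_at A q s X -> q' \in X.

Definition forced_path A w (qs : nat -> Q) :=
  qs 0 = init A /\ forall m, forced A (qs m) (w m) (qs m.+1).

Lemma forced_sat A q s q' P : forced A q s q' -> sat_delta A q s P -> P q'.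
Proof.
move=> fq' satP; have [X XP] := set_of_pred P.
by apply/XP/fq'; apply: sat_delta_mono satP => q'' /XP.
Qed.

Lemma conj_succ_forced A q s S q' : conj_succ A q s S -> forced A q s q' <-> q' \in S.
Proof.
move=> succS; split; first by apply; apply/succS/forall_inP.
by move=> q'S X /succS/forall_inP; apply.
Qed.

Lemma conj_succ_sat_forced A q s S : conj_succ A q s S -> sat_delta A q s (forced A q s).
Proof.
move=> succS; have /succS satS : [forall q' in S, q' \in S] by apply/forall_inP.
by apply: sat_delta_mono satS => q' /(conj_succ_forced _ succS).
Qed.

Lemma conj_succ_sw_forall A p q s S1 S0 :
  conj_succ A q (assign p true s) S1 -> conj_succ A q (assign p false s) S0 ->
  conj_succ (sw_forall A p) q s (S1 :|: S0).
Proof.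
move=> succ1 succ0 X; split.
  case/sat_delta_sw_forall => /succ1/forall_inP sub1 /succ0/forall_inP sub0.
  by apply/forall_inP => q'; rewrite inE => /orP [/sub1|/sub0].
move/forall_inP => sub; apply/sat_delta_sw_forall; split; [apply/succ1 | apply/succ0];
  by apply/forall_inP => q' q'S; apply: sub; rewrite inE q'S ?orbT.
Qed.

Lemma universal_sw_forall A p : universal A -> universal (sw_forall A p).
Proof.
move=> uA q s; have [S1 succ1] := uA q (assign p true s).
have [S0 succ0] := uA q (assign p false s).
by exists (S1 :|: S0); apply: conj_succ_sw_forall.
Qed.

Lemma forced_sw_forall A p q s q' :
  universal A -> forced (sw_forall A p) q s q' -> exists b, forced A q (assign p b s) q'.
Proof.
move=> uA; have [S1 succ1] := uA q (assign p true s).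
have [S0 succ0] := uA q (assign p false s).
move/(conj_succ_forced _ (conj_succ_sw_forall succ1 succ0)); rewrite inE.
case/orP => [/(conj_succ_forced _ succ1) | /(conj_succ_forced _ succ0)];
  by [exists true | exists false].
Qed.

Lemma inf_accepting_forced_path A w qs :
  lang A w -> forced_path A w qs -> inf_accepting A qs.
Proof.
move=> [N [lab [[N0 lab0 _ run] acc]]] [qs0 forced_qs].
have [||c Hc] := @dependent_choice_path (fun y => N y /\ lab y = qs (size y))
  (fun _ _ => True).
- by rewrite lab0 qs0.
- move=> y [/run run_y lab_y]; rewrite lab_y in run_y.
  have [i [Ni lab_i]] := forced_sat (forced_qs (size y)) run_y.
  by exists i; rewrite size_rcons.
- move=> n; have [m [le_nm]] := acc c (fun m => (Hc m).1.1) n.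
  by rewrite (Hc m).1.2 size_mkseq; exists m.
Qed.

(* The canonical run of a universal automaton: a node is a sequence of codes of
   states, each a forced successor of the previous one at its letter. *)
Section ForcedTree.
Variables (A : aba V Q) (w : word V).

Definition code_state (i : nat) : Q := nth (init A) (enum Q) i.

Definition node_state (x : seq nat) : Q := last (init A) (map code_state x).

Fixpoint forced_chain q k (qs : seq Q) : Prop :=
  if qs is q' :: qs' then forced A q (w k) q' /\ forced_chain q' k.+1 qs' else True.

Definition forced_node (x : seq nat) : Prop := forced_chain (init A) 0 (map code_state x).

Lemma code_stateK q : code_state (index q (enum Q)) = q.
Proof. by rewrite /code_state nth_index ?mem_enum. Qed.

Lemma node_state_rcons x i : node_state (rcons x i) = code_state i.
Proof. by rewrite /node_state map_rcons last_rcons. Qed.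

Lemma forced_chain_rcons q k qs q' :
  forced_chain q k (rcons qs q') <->
  forced_chain q k qs /\ forced A (last q qs) (w (k + size qs)) q'.
Proof.
elim: qs q k => [|q1 qs IH] q k /=; first by rewrite addn0; tauto.
by rewrite IH addSnnS; tauto.
Qed.

Lemma forced_node_rcons x i :
  forced_node (rcons x i) <->
  forced_node x /\ forced A (node_state x) (w (size x)) (code_state i).
Proof. by rewrite /forced_node map_rcons forced_chain_rcons size_map. Qed.

Lemma forced_tree_run : universal A -> is_run A w forced_node node_state.
Proof.
move=> uA; split=> // [x i /forced_node_rcons [] // | x Nx].
have [S succS] := uA (node_state x) (w (size x)).
apply: sat_delta_mono (conj_succ_sat_forced succS) => q fq.
exists (index q (enum Q)).
by split; [apply/forced_node_rcons | rewrite node_state_rcons]; rewrite code_stateK.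
Qed.

Lemma forced_tree_accepting :
  (forall qs, forced_path A w qs -> inf_accepting A qs) ->
  run_accepting A forced_node node_state.
Proof.
move=> acc b Nb; apply: (acc (fun m => node_state (mkseq b m))); split=> // m.
have := Nb m.+1; rewrite mkseqS node_state_rcons => /forced_node_rcons [_].
by rewrite size_mkseq.
Qed.

End ForcedTree.

Lemma lang_of_forced_paths A w :
  universal A -> (forall qs, forced_path A w qs -> inf_accepting A qs) -> lang A w.
Proof.
move=> uA acc; exists (forced_node A w), (node_state A).
by split; [apply: forced_tree_run | apply: forced_tree_accepting].
Qed.

Lemma lang_exists_of_sw_exists A p w :
  nondeterministic A -> p_free p w -> lang (sw_exists A p) w -> lang_exists A p w.
Proof.
move=> ndA wF /(linear_run_of_lang (nondeterministic_sw_exists p ndA)) [qs [qs0 step] acc].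
have [bit bitP] : exists bit : nat -> bool,
    forall m, eval_at A (qs m) (assign p (bit m) (w m)) [set qs m.+1].
  apply: (functional_choice (fun m (b : bool) =>
    eval_at A (qs m) (assign p b (w m)) [set qs m.+1])) => m.
  by case/sat_delta_sw_exists: (step m); [exists true | exists false].
exists (fun m => assign p (bit m) (w m)); split; first exact: ext_of_assign.
exact: (@lang_of_linear_run _ _ qs).
Qed.

Lemma sw_forall_of_lang_forall A p w :
  universal A -> p_free p w -> lang_forall A p w -> lang (sw_forall A p) w.
Proof.
move=> uA wF accA; apply: lang_of_forced_paths (universal_sw_forall p uA) _.
move=> qs [qs0 forced_qs].
have [bit bitP] : exists bit : nat -> bool,
    forall m, forced A (qs m) (assign p (bit m) (w m)) (qs m.+1).
  apply: (functional_choice (fun m (b : bool) =>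
    forced A (qs m) (assign p b (w m)) (qs m.+1))) => m.
  exact: forced_sw_forall.
apply: (@inf_accepting_forced_path A (fun m => assign p (bit m) (w m))) => //.
exact: accA (ext_of_assign _ wF).
Qed.

Lemma deterministic_nondeterministic A : deterministic A -> nondeterministic A.
Proof.
move=> dA q s; have [q' succ] := dA q s; exists [set q'] => X; rewrite succ.
split=> [q'X|/exists_inP [q'' /set1P -> //]].
by apply/exists_inP; exists q'; rewrite ?set11.
Qed.

Lemma deterministic_universal A : deterministic A -> universal A.
Proof.
move=> dA q s; have [q' succ] := dA q s; exists [set q'] => X; rewrite succ.
by split=> [q'X|/forall_inP]; [apply/forall_inP => q'' /set1P -> | apply; rewrite set11].
Qed.

Lemma existential_nf_nondeterministic A p : nondeterministic A -> existential_nf A p.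
Proof.
move=> ndA w wF; split; first exact: lang_exists_of_sw_exists.
exact: sw_exists_of_lang_exists.
Qed.

Lemma universal_nf_universal A p : universal A -> universal_nf A p.
Proof.
move=> uA w wF; split; first exact: lang_forall_of_sw_forall.
exact: sw_forall_of_lang_forall.
Qed.

End Automata.

Theorem mainTheorem1 (V Q : finType) (A : aba V Q) (p : V) :
  [/\ nondeterministic A -> existential_nf A p,
      universal A -> universal_nf A p &
      deterministic A -> existential_nf A p /\ universal_nf A p].
Proof.
split; [exact: existential_nf_nondeterministic | exact: universal_nf_universal |].
move=> dA; split.
  exact/existential_nf_nondeterministic/deterministic_nondeterministic.
exact/universal_nf_universal/deterministic_universal.
Qed.
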